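(* Let $\mathbb{X}\subset\mathbb{R}^m$ be compact and let $f:\mathbb{R}^m\to\mathbb{R}$ be continuous and positive homogeneous. Then for every $\epsilon>0$ there exists a finite-layer HomoMLP $\mathcal{A}'$ with ReLU activations, representing $F_{\mathcal{A}'}$, such that $|F_{\mathcal{A}'}(x)-f(x)|<\epsilon$ for all $x\in\mathbb{X}$.
   Context: A function $g$ is positive homogeneous iff $g(\lambda x)=\lambda g(x)$ for all $x$ and all $\lambda>0$. A HomoMLP is a multilayer perceptron without bias terms whose activation functions are positive homogeneous, i.e. $x\mapsto W_L\,\sigma(W_{L-1}\,\sigma(\cdots\sigma(W_1x)\cdots))$ with $\sigma$ applied coordinatewise (here $\sigma=\mathrm{ReLU}$). *)

From HB Require Import structures.
From mathcomp Require Import all_boot all_order all_algebra.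
From mathcomp Require Import all_classical all_reals all_analysis.
Set Implicit Arguments. Unset Strict Implicit. Unset Printing Implicit Defensive.
Import Order.TTheory GRing.Theory Num.Theory.
Import numFieldNormedType.Exports.
Local Open Scope ring_scope.

Definition pos_homogeneous (R : realType) (m : nat) (g : 'cV[R]_m -> R) : Prop :=
  forall (x : 'cV[R]_m) (l : R), 0 < l -> g (l *: x) = l * g x.

Definition relu (R : realType) (n : nat) (x : 'cV[R]_n) : 'cV[R]_n :=
  map_mx (fun a => Num.max a 0) x.

(* A bias-free ReLU MLP from R^n to R^k, with finitely many layers:
   HLin W          represents  x |-> W x  (the last linear layer W_L);
   HLayer W A      represents  x |-> A (relu (W x)). *)
Inductive homoMLP (R : realType) : nat -> nat -> Type :=
| HLin (n k : nat) of 'M[R]_(k, n) : homoMLP R n k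
| HLayer (n p k : nat) of 'M[R]_(p, n) & homoMLP R p k : homoMLP R n k.

Fixpoint eval_homoMLP (R : realType) (n k : nat) (A : homoMLP R n k)
  : 'cV[R]_n -> 'cV[R]_k :=
  match A in homoMLP _ n k return 'cV[R]_n -> 'cV[R]_k with
  | HLin _ _ W => fun x => W *m x
  | HLayer _ _ _ W B => fun x => eval_homoMLP B (relu (W *m x))
  end.

Definition F_homoMLP (R : realType) (m : nat) (A : homoMLP R m 1) (x : 'cV[R]_m) : R :=
  eval_homoMLP A x 0 0.

From HB Require Import structures.
From mathcomp Require Import all_boot all_order all_algebra.
From mathcomp Require Import all_classical all_reals all_analysis.
From mathcomp Require Import ring lra zify.
Import Order.TTheory GRing.Theory Num.Theory.
Import numFieldNormedType.Exports.
Local Open Scope ring_scope.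
Local Open Scope classical_set_scope.

(* 1. Network calculus: functions computed by HomoMLPs are closed under
      parallel composition, pre- and post-composition with linear maps and a
      final ReLU.  Hence the continuous scalar functions they compute (called
      "continuous network functions") contain every linear form and are
      closed under +, scaling, ReLU and min.
   2. Two-point interpolation: for any points x, y there is a continuous
      network function agreeing with f at x and y.  If x, y are linearly
      independent a linear form does it (Gram determinant); otherwise both lie
      on a line through some b, and f is a combination of relu(<b,.>) and
      relu(-<b,.>) on that line by positive homogeneity.
   3. A compactness argument (Kakutani-Krein): minima of finitely many
      interpolants give, for each x, a g_x with g_x(x) = f(x) and g_x < f + eps
      on X; then a maximum (a min of negatives) of finitely many g_x is within
      eps of f on X. *)

Set Implicit Arguments. Unset Strict Implicit.

Section NetworkCalculus.
Variable R : realType.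

Definition net_repr (n k : nat) (g : 'cV[R]_n -> 'cV[R]_k) : Prop :=
  exists A : homoMLP R n k, forall x, eval_homoMLP A x = g x.

(* Number of layers; the measure for the parallel-composition induction. *)
Fixpoint depth (n k : nat) (A : homoMLP R n k) : nat :=
  match A with
  | HLin _ _ _ => 1%N
  | HLayer _ _ _ _ B => (depth B).+1
  end.

Lemma depth_gt0 n k (A : homoMLP R n k) : (0 < depth A)%N.
Proof. by case: A. Qed.

Definition precomp (n k q : nat) (A : homoMLP R n k) (M : 'M[R]_(n, q))
  : homoMLP R q k :=
  match A in homoMLP _ n k return 'M[R]_(n, q) -> homoMLP R q k with
  | HLin _ _ W => fun M => HLin (W *m M)
  | HLayer _ _ _ W B => fun M => HLayer (W *m M) B
  end M.

Lemma precompE n k q (A : homoMLP R n k) (M : 'M[R]_(n, q)) x :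
  eval_homoMLP (precomp A M) x = eval_homoMLP A (M *m x).
Proof. by case: A M => [? ? W|? ? ? W B] M; rewrite /= mulmxA. Qed.

Lemma depth_precomp n k q (A : homoMLP R n k) (M : 'M[R]_(n, q)) :
  depth (precomp A M) = depth A.
Proof. by case: A M. Qed.

Fixpoint postlin (n k q : nat) (A : homoMLP R n k) (M : 'M[R]_(q, k))
  : homoMLP R n q :=
  match A in homoMLP _ n k return 'M[R]_(q, k) -> homoMLP R n q with
  | HLin _ _ W => fun M => HLin (M *m W)
  | HLayer _ _ _ W B => fun M => HLayer W (postlin B M)
  end M.

Lemma postlinE n k q (A : homoMLP R n k) (M : 'M[R]_(q, k)) x :
  eval_homoMLP (postlin A M) x = M *m eval_homoMLP A x.
Proof. by elim: A q M x => [? ? W|? ? ? W B IH] q M x /=; rewrite ?mulmxA ?IH. Qed.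

Fixpoint postrelu (n k : nat) (A : homoMLP R n k) : homoMLP R n k :=
  match A with
  | HLin _ _ W => HLayer W (HLin 1%:M)
  | HLayer _ _ _ W B => HLayer W (postrelu B)
  end.

Lemma postreluE n k (A : homoMLP R n k) x :
  eval_homoMLP (postrelu A) x = relu (eval_homoMLP A x).
Proof. by elim: A x => [? ? W|? ? ? W B IH] x /=; rewrite ?mul1mx ?IH. Qed.

Lemma relu_col_mx p1 p2 (a : 'cV[R]_p1) (b : 'cV[R]_p2) :
  relu (col_mx a b) = col_mx (relu a) (relu b).
Proof. by rewrite /relu map_col_mx. Qed.

Lemma usubmx_mul p1 p2 (z : 'cV[R]_(p1 + p2)) : usubmx z = row_mx 1%:M 0 *m z.
Proof. by rewrite -[z in RHS](vsubmxK z) mul_row_col mul1mx mul0mx addr0. Qed.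

Lemma dsubmx_mul p1 p2 (z : 'cV[R]_(p1 + p2)) : dsubmx z = row_mx 0 1%:M *m z.
Proof. by rewrite -[z in RHS](vsubmxK z) mul_row_col mul1mx mul0mx add0r. Qed.

Lemma relu_sub_reluN (a : R) : Num.max a 0 - Num.max (- a) 0 = a.
Proof.
by case: (lerP 0 a) => h; [rewrite (max_idPr _) | rewrite (max_idPl _)]; lra.
Qed.

(* A linear map is a one-hidden-layer network, since y = relu y - relu (-y);
   this lets a shallow network be padded to the depth of a deeper one. *)
Lemma relu_linear n k (W : 'M[R]_(k, n)) x :
  row_mx 1%:M (- 1%:M) *m relu (col_mx W (- W) *m x) = W *m x.
Proof.
rewrite mul_col_mx relu_col_mx mul_row_col mul1mx mulNmx mul1mx mulNmx.
by apply/matrixP => i j; rewrite !mxE relu_sub_reluN.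
Qed.

Lemma net_repr_pair n k1 k2 (A1 : homoMLP R n k1) (A2 : homoMLP R n k2) :
  net_repr (fun x => col_mx (eval_homoMLP A1 x) (eval_homoMLP A2 x)).
Proof.
have [d] : exists d, (depth A1 + depth A2 <= d)%N by exists (depth A1 + depth A2).
elim: d n k1 k2 A1 A2 => [|d IH] n k1 k2 A1 A2.
  by rewrite leqn0 addn_eq0 eqn0Ngt depth_gt0.
(* Two hidden layers W1, W2 are merged into one stacked layer; the remaining
   networks B1, B2 are paired by induction after selecting their blocks. *)
have stack n' k1' k2' p1 p2 (W1 : 'M[R]_(p1, n')) (W2 : 'M[R]_(p2, n'))
    (B1 : homoMLP R p1 k1') (B2 : homoMLP R p2 k2') :
    (depth B1 + depth B2 <= d)%N ->
    net_repr (fun x => col_mx (eval_homoMLP B1 (relu (W1 *m x)))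
                              (eval_homoMLP B2 (relu (W2 *m x)))).
  move=> hd; have [|C HC] := IH _ _ _ (precomp B1 (row_mx 1%:M 0))
                                     (precomp B2 (row_mx 0 1%:M)).
    by rewrite !depth_precomp.
  exists (HLayer (col_mx W1 W2) C) => x /=.
  by rewrite HC !precompE mul_col_mx relu_col_mx -usubmx_mul -dsubmx_mul
    col_mxKu col_mxKd.
case: A1 A2 => [? ? W1|? p1 ? W1 B1] A2.
  case: A2 W1 => [? ? W2|? p2 ? W2 B2] W1 /= hd.
    by exists (HLin (col_mx W1 W2)) => x /=; rewrite mul_col_mx.
  have [|C HC] := stack _ _ _ _ _ (col_mx W1 (- W1)) W2 (HLin (row_mx 1%:M (- 1%:M))) B2.
    by move: hd => /=; lia.
  by exists C => x; rewrite HC /= relu_linear.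
case: A2 W1 B1 => [? ? W2|? p2 ? W2 B2] W1 B1 /= hd.
  have [|C HC] := stack _ _ _ _ _ W1 (col_mx W2 (- W2)) B1 (HLin (row_mx 1%:M (- 1%:M))).
    by move: hd => /=; lia.
  by exists C => x; rewrite HC /= relu_linear.
have [|C HC] := stack _ _ _ _ _ W1 W2 B1 B2; last by exists C.
by move: hd; lia.
Qed.

Definition net_fun (m : nat) (g : 'cV[R]_m -> R) : Prop :=
  net_repr (fun x => const_mx (g x) : 'cV[R]_1).

Lemma net_funP m (g : 'cV[R]_m -> R) :
  net_fun g -> exists A, forall x, F_homoMLP A x = g x.
Proof. by move=> [A HA]; exists A => x; rewrite /F_homoMLP HA mxE. Qed.

Lemma net_fun_linear m (u : 'rV[R]_m) : net_fun (fun x => (u *m x) 0 0).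
Proof. by exists (HLin u) => x /=; apply/matrixP => i j; rewrite !mxE !ord1. Qed.

Lemma net_fun_add m (g1 g2 : 'cV[R]_m -> R) :
  net_fun g1 -> net_fun g2 -> net_fun (fun x => g1 x + g2 x).
Proof.
move=> [A1 H1] [A2 H2]; have [A HA] := net_repr_pair A1 A2.
exists (postlin A (row_mx 1%:M 1%:M)) => x.
rewrite postlinE HA H1 H2 mul_row_col !mul1mx.
by apply/matrixP => i j; rewrite !mxE.
Qed.

Lemma net_fun_scale m c (g : 'cV[R]_m -> R) :
  net_fun g -> net_fun (fun x => c * g x).
Proof.
move=> [A HA]; exists (postlin A c%:M) => x.
by rewrite postlinE HA mul_scalar_mx; apply/matrixP => i j; rewrite !mxE.
Qed.

Lemma net_fun_relu m (g : 'cV[R]_m -> R) :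
  net_fun g -> net_fun (fun x => Num.max (g x) 0).
Proof.
move=> [A HA]; exists (postrelu A) => x.
by rewrite postreluE HA; apply/matrixP => i j; rewrite !mxE.
Qed.

End NetworkCalculus.

Section ContinuousNetworkFunctions.
Variables (R : realType) (m : nat).

Definition cnet_fun (g : 'cV[R]_m -> R) : Prop := net_fun g /\ continuous g.

Definition dot (b z : 'cV[R]_m) : R := \sum_i b i 0 * z i 0.

Lemma cnet_fun_dot b : cnet_fun (dot b).
Proof.
split.
  have [A HA] := net_fun_linear b^T; exists A => x; rewrite HA.
  by congr const_mx; rewrite mxE; apply: eq_bigr => i _; rewrite mxE.
apply: (continuous_big (op := +%R) (x0 := 0) (P := xpredT) add_continuous) => i _ z.
by apply: continuousM; [exact: cst_continuous | exact: coord_continuous].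
Qed.

Lemma cnet_fun_add g1 g2 :
  cnet_fun g1 -> cnet_fun g2 -> cnet_fun (fun x => g1 x + g2 x).
Proof.
move=> [n1 c1] [n2 c2]; split; first exact: net_fun_add.
by move=> z; apply: continuousD; [exact: c1 | exact: c2].
Qed.

Lemma cnet_fun_scale c g : cnet_fun g -> cnet_fun (fun x => c * g x).
Proof.
move=> [n1 c1]; split; first exact: net_fun_scale.
by move=> z; apply: continuousM; [exact: cst_continuous | exact: c1].
Qed.

Lemma cnet_fun_relu g : cnet_fun g -> cnet_fun (fun x => Num.max (g x) 0).
Proof.
move=> [n1 c1]; split; first exact: net_fun_relu.
by move=> z; apply: (@continuous_max R _ g (fun _ => 0)); [exact: c1 | exact: cst_continuous].
Qed.

Lemma cnet_fun_opp g : cnet_fun g -> cnet_fun (fun x => - g x).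
Proof.
move=> /(cnet_fun_scale (-1)).
by congr cnet_fun; apply/funext => x; rewrite mulN1r.
Qed.

Lemma min_relu (a b : R) : a - Num.max (a - b) 0 = Num.min a b.
Proof.
by case: (lerP a b) => h; [rewrite (max_idPr _) | rewrite (max_idPl _)]; lra.
Qed.

Lemma cnet_fun_min g1 g2 :
  cnet_fun g1 -> cnet_fun g2 -> cnet_fun (fun x => Num.min (g1 x) (g2 x)).
Proof.
move=> h1 h2.
have := cnet_fun_add h1 (cnet_fun_opp (cnet_fun_relu (cnet_fun_add h1 (cnet_fun_opp h2)))).
by congr cnet_fun; apply/funext => x; rewrite min_relu.
Qed.

End ContinuousNetworkFunctions.

Section Gram.
Variables (R : realType) (m : nat).
Implicit Types b y z : 'cV[R]_m.

Lemma dotC b z : dot b z = dot z b.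
Proof. by apply: eq_bigr => i _; rewrite mulrC. Qed.

Lemma dotZr b c z : dot b (c *: z) = c * dot b z.
Proof. by rewrite /dot mulr_sumr; apply: eq_bigr => i _; rewrite mxE; ring. Qed.

Lemma dotZl b c z : dot (c *: b) z = c * dot b z.
Proof. by rewrite dotC dotZr dotC. Qed.

Lemma dotBr b y z : dot b (y - z) = dot b y - dot b z.
Proof. by rewrite /dot -sumrB; apply: eq_bigr => i _; rewrite !mxE; ring. Qed.

Lemma dotBl b y z : dot (y - z) b = dot y b - dot z b.
Proof. by rewrite dotC dotBr dotC (dotC b). Qed.

Lemma dot0l z : dot 0 z = 0.
Proof. by rewrite /dot big1 // => i _; rewrite mxE mul0r. Qed.

Lemma dot_ge0 z : 0 <= dot z z.
Proof. by apply: sumr_ge0 => i _; rewrite -expr2 sqr_ge0. Qed.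

Lemma dot_eq0 z : (dot z z == 0) = (z == 0).
Proof.
apply/eqP/eqP => [zz0|->]; last exact: dot0l.
have sq0 i : z i 0 * z i 0 = 0.
  by apply: (psumr_eq0P _ zz0) => // k _; rewrite -expr2 sqr_ge0.
apply/matrixP => i j; rewrite ord1 mxE.
by have /eqP := sq0 i; rewrite mulf_eq0 orbb => /eqP.
Qed.

Definition gram (x y : 'cV[R]_m) : R := dot x x * dot y y - dot x y * dot x y.

(* Equality case of Cauchy-Schwarz: y is the projection of y on x. *)
Lemma gram_eq0_collinear x y :
  x != 0 -> gram x y = 0 -> y = (dot x y / dot x x) *: x.
Proof.
rewrite -dot_eq0 => xx0 g0; set c := dot x y / dot x x.
apply/eqP; rewrite -subr_eq0 -dot_eq0; apply/eqP.
rewrite !(dotBl, dotBr, dotZl, dotZr) (dotC y x).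
have -> : dot y y - c * dot x y - c * (dot x y - c * dot x x) = gram x y / dot x x.
  by rewrite /c /gram; field.
by rewrite g0 mul0r.
Qed.

End Gram.

Section Interpolation.
Variables (R : realType) (m : nat) (f : 'cV[R]_m -> R).
Hypothesis f_hom : pos_homogeneous f.

(* Taking l = 2 at x = 0 gives f 0 = 2 f 0. *)
Lemma pos_homogeneous0 : f 0 = 0.
Proof. by have := f_hom 0 (ltr0n R 2); rewrite scaler0 => h; lra. Qed.

(* On the line R b, f is determined by f(b) and f(-b):
   f (c b) = relu(c) f(b) + relu(-c) f(-b), and c = <b, c b> / <b, b>. *)
Definition line_interp (b z : 'cV[R]_m) : R :=
  f b / dot b b * Num.max (dot b z) 0 + f (- b) / dot b b * Num.max (- dot b z) 0.

Lemma cnet_fun_line_interp b : cnet_fun (line_interp b).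
Proof.
by apply: cnet_fun_add; apply: cnet_fun_scale; apply: cnet_fun_relu;
  [exact: cnet_fun_dot | apply: cnet_fun_opp; exact: cnet_fun_dot].
Qed.

Lemma line_interpE b c : line_interp b (c *: b) = f (c *: b).
Proof.
have [->|bn0] := eqVneq b 0.
  by rewrite scaler0 /line_interp dot0l !oppr0 pos_homogeneous0 maxxx !mulr0 addr0.
have bb0 : 0 < dot b b by rewrite lt_def dot_eq0 bn0 dot_ge0.
rewrite /line_interp dotZr.
case: (ltgtP c 0) => hc.
- have -> : c *: b = (- c) *: (- b) by rewrite scaleNr scalerN opprK.
  have cb : c * dot b b < 0 by rewrite pmulr_llt0.
  rewrite f_hom ?oppr_gt0 // (max_idPr _) ?(max_idPl _); try lra.
  by field; rewrite lt0r_neq0.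
- have cb : 0 < c * dot b b by rewrite pmulr_lgt0.
  rewrite f_hom // (max_idPl _) ?(max_idPr _); try lra.
  by field; rewrite lt0r_neq0.
- by rewrite hc scale0r mul0r pos_homogeneous0 oppr0 maxxx !mulr0 addr0.
Qed.

Lemma two_point_interp x y : exists g, cnet_fun g /\ g x = f x /\ g y = f y.
Proof.
have [->|xn0] := eqVneq x 0.
  exists (line_interp y); split; first exact: cnet_fun_line_interp.
  by split; [rewrite -(scale0r y) | rewrite -{2 3}(scale1r y)]; exact: line_interpE.
have [g0|gn0] := eqVneq (gram x y) 0.
  exists (line_interp x); split; first exact: cnet_fun_line_interp.
  rewrite (gram_eq0_collinear xn0 g0).
  by split; [rewrite -{2 3}(scale1r x) |]; exact: line_interpE.
(* Independent case: solve the 2x2 Gram system for g = a <x,.> + b <y,.>. *)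
pose a := (f x * dot y y - f y * dot x y) / gram x y.
pose b := (f y * dot x x - f x * dot x y) / gram x y.
exists (fun z => a * dot x z + b * dot y z); split.
  by apply: cnet_fun_add; apply: cnet_fun_scale; exact: cnet_fun_dot.
by rewrite (dotC y x) /a /b; split; move: gn0; rewrite /gram => gn0; field.
Qed.

End Interpolation.

Section LatticeCompactness.
Variables (R : realType) (T : ptopologicalType).

Lemma open_lt_fun (g u : T -> R) :
  continuous g -> continuous u -> open [set z | g z < u z].
Proof.
move=> cg cu.
have -> : [set z | g z < u z] = (fun z => u z - g z) @^-1` [set t | 0 < t].
  by apply/seteqP; split => z /=; rewrite subr_gt0.
apply: open_comp; last exact: open_gt.
by move=> z _; apply: continuousB; [exact: cu | exact: cg].
Qed.

(* Kakutani-Krein step: if each h y lies below u near y, then finitely many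
   of them suffice, and their minimum lies below u on the whole compact K. *)
Lemma compact_min_below (K : set T) (P : (T -> R) -> Prop) (I : T -> R -> Prop)
    (u : T -> R) (h : T -> T -> R) (y0 : T) :
  compact K ->
  (forall g1 g2, P g1 -> P g2 -> P (fun z => Num.min (g1 z) (g2 z))) ->
  (forall z a b, I z a -> I z b -> I z (Num.min a b)) ->
  (forall y, P (h y)) -> (forall y z, I z (h y z)) ->
  (forall y, open [set z | h y z < u z]) -> (forall y, K y -> h y y < u y) ->
  exists g, [/\ P g, forall z, I z (g z) & forall z, K z -> g z < u z].
Proof.
move=> cK Pmin Imin Ph Ih h_open h_diag.
rewrite compact_cover in cK.
have [|D _ cov] := cK _ K (fun y => [set z | h y z < u z]) (fun y _ => h_open y).
  by move=> z Kz; exists z => //; exact: h_diag.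
have min_over (s : seq T) : exists g, [/\ P g, forall z, I z (g z) &
    forall y z, y \in s -> g z <= h y z].
  elim: s => [|y s [g [Pg Ig g_le]]]; first by exists (h y0).
  exists (fun z => Num.min (h y z) (g z)); split; first exact: Pmin.
    by move=> z; apply: Imin.
  move=> y' z; rewrite inE => /orP [/eqP ->|ys]; rewrite ge_min ?lexx //.
  by rewrite g_le ?orbT.
have [g [Pg Ig g_le]] := min_over (finmap.enum_fset D).
exists g; split => // z /cov [y /= Dy hyz].
by apply: le_lt_trans hyz; exact: g_le.
Qed.

End LatticeCompactness.

Section Approximation.
Variables (R : realType) (m : nat) (f : 'cV[R]_m -> R) (X : set 'cV[R]_m).
Variable eps : R.
Hypotheses (f_hom : pos_homogeneous f) (f_cont : continuous f).
Hypotheses (X_compact : compact X) (eps_gt0 : 0 < eps).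

Lemma f_plus_continuous (s : R) : continuous (fun z => f z + s).
Proof. by move=> z; apply: continuousD; [exact: f_cont | exact: cst_continuous]. Qed.

Lemma fN_plus_continuous (s : R) : continuous (fun z => - f z + s).
Proof.
move=> z; apply: (@continuousD _ _ _ (fun z => - f z) (fun _ => s)).
  by apply: continuousN; exact: f_cont.
exact: cst_continuous.
Qed.

(* For each x, a network function exact at x and below f + eps on X:
   the minimum of finitely many two-point interpolants through x. *)
Lemma upper_approx x :
  exists g, [/\ cnet_fun g, g x = f x & forall z, X z -> g z < f z + eps].
Proof.
have [h hP] := choice (fun y => two_point_interp f_hom x y).
have [||||g [g_net g_x g_lt]] := compact_min_below (I := fun z v => z = x -> v = f x)
  (u := fun z => f z + eps) x X_compact (@cnet_fun_min R m) _ (fun y => (hP y).1) _ _ _.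
- by move=> z a b ha hb zx; rewrite ha ?hb // minxx.
- by move=> y z ->; exact: (hP y).2.1.
- move=> y; apply: open_lt_fun; first exact: (hP y).1.2.
  exact: f_plus_continuous.
- by move=> y _; rewrite (hP y).2.2 ltrDl.
by exists g; split => //; exact: g_x.
Qed.

(* The maximum of finitely many upper approximants, taken as the minimum of
   their negatives, is within eps of f on X. *)
Lemma uniform_approx : exists g, cnet_fun g /\ forall z, X z -> `|g z - f z| < eps.
Proof.
have [k kP] := choice upper_approx.
have k_net y : cnet_fun (k y) by case: (kP y).
have k_diag y : k y y = f y by case: (kP y).
have k_lt y z : X z -> k y z < f z + eps by case: (kP y) => _ _; apply.
have [||||g [g_net g_lo g_hi]] := compact_min_below
  (I := fun z v => X z -> - f z - eps < v) (u := fun z => - f z + eps)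
  (h := fun y z => - k y z) 0 X_compact (@cnet_fun_min R m) _
  (fun y => cnet_fun_opp (k_net y)) _ _ _.
- by move=> z a b ha hb Xz; rewrite lt_min ha ?hb.
- by move=> y z /(k_lt y); lra.
- move=> y; apply: open_lt_fun.
    by move=> z; apply: continuousN; exact: (k_net y).2.
  exact: fN_plus_continuous.
- by move=> y _; rewrite k_diag ltrDl.
exists (fun z => - g z); split; first exact: cnet_fun_opp.
move=> z Xz; have := g_lo z Xz; have := g_hi z Xz.
by rewrite ltr_norml => h1 h2; apply/andP; split; lra.
Qed.

End Approximation.

Unset Implicit Arguments.

Theorem mainTheorem6 (R : realType) (m : nat) (X : set 'cV[R]_m)
  (f : 'cV[R]_m -> R) :
  compact X -> continuous f -> pos_homogeneous f ->
  forall eps : R, 0 < eps ->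
  exists A : homoMLP R m 1, forall x, X x -> `|F_homoMLP A x - f x| < eps.
Proof.
move=> X_compact f_cont f_hom eps eps_gt0.
have [g [[g_net _] g_approx]] := uniform_approx f_hom f_cont X_compact eps_gt0.
have [A A_g] := net_funP g_net.
by exists A => x Xx; rewrite A_g; exact: g_approx.
Qed.
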